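(* Let $m\geq 3$ be an integer. For polynomials $x(s)$ and $y(s)$ with complex coefficients such that $x$ is monic of degree $m$ and $\deg y\leq m$, let $p(x,y)(s)=(s^4+2s^2)x(s)+y(s)$. Then \[ \inf\{\alpha(p(x,y)) : x \text{ monic of degree } m,\ \deg y\le m\} = -\infty . \]
   Context: For a polynomial $q$ with complex coefficients, its abscissa is $\alpha(q)=\max\{\Re z : q(z)=0\}$. *)

From HB Require Import structures.
From mathcomp Require Import all_boot all_order all_algebra.
From mathcomp Require Import all_classical all_reals ereal.
From mathcomp Require Import complex.
Set Implicit Arguments. Unset Strict Implicit. Unset Printing Implicit Defensive.
Import Order.TTheory GRing.Theory Num.Theory.
Local Open Scope ring_scope.
Local Open Scope classical_set_scope.

(* abscissa q = max { Re z : q(z) = 0 }, taken in the extended reals as the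
   supremum of the (finite, for q nonzero nonconstant) set of real parts of
   roots of q. *)
Definition abscissa (R : realType) (q : {poly R[i]}) : \bar R :=
  ereal_sup [set (complex.Re z)%:E | z in [set z : R[i] | root q z]].

Definition pxy (R : realType) (x y : {poly R[i]}) : {poly R[i]} :=
  ('X^4 + 2%:R *: 'X^2) * x + y.

From HB Require Import structures.
From mathcomp Require Import all_boot all_order all_algebra.
From mathcomp Require Import all_classical all_reals ereal.
From mathcomp Require Import complex.
Import Order.TTheory GRing.Theory Num.Theory.
Local Open Scope ring_scope.
Local Open Scope classical_set_scope.

(* Since s^4 + 2 s^2 is monic of degree 4 and m >= 3, Euclidean division
   writes every monic polynomial of degree m + 4 as p(x, y) with x monic of
   degree m and deg y <= 3 <= m. Taking (s - r)^(m+4), whose only root is r,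
   gives abscissa r for every real r. *)

Lemma monic_divp (F : fieldType) (p q : {poly F}) :
  p \is monic -> q \is monic -> (size q <= size p)%N -> p %/ q \is monic.
Proof.
move=> mon_p mon_q le_qp.
have q_neq0 : q != 0 by apply: monic_neq0.
have d_neq0 : p %/ q != 0.
  by rewrite divp_eq0 (negPf (monic_neq0 mon_p)) (negPf q_neq0) ltnNge le_qp.
have size_mod : (size (p %% q)%R < size (p %/ q * q)%R)%N.
  rewrite size_Mmonic // -(prednK (_ : 0 < size (p %/ q)%R)%N) ?size_poly_gt0 //.
  by rewrite (leq_trans _ (leq_addl _ _)) ?ltn_modp.
by rewrite -(monicMr _ mon_q) monicE -(lead_coefDl size_mod) -divp_eq.
Qed.

Lemma size_X4_2X2 (R : nzRingType) : size ('X^4 + 2%:R *: 'X^2 : {poly R}) = 5%N.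
Proof.
rewrite size_polyDl ?size_polyXn // (leq_ltn_trans (size_scale_leq _ _)) //.
by rewrite size_polyXn.
Qed.

Lemma monic_X4_2X2 (R : nzRingType) : ('X^4 + 2%:R *: 'X^2 : {poly R}) \is monic.
Proof.
rewrite monicE lead_coefDl ?lead_coefXn // size_polyXn.
by rewrite (leq_ltn_trans (size_scale_leq _ _)) // size_polyXn.
Qed.

Lemma pxy_monic_decomposition {R : realType} {m : nat} {p : {poly R[i]}} :
  (3 <= m)%N -> p \is monic -> size p = (m + 4).+1 ->
  exists2 xy : {poly R[i]} * {poly R[i]},
    [/\ xy.1 \is monic, size xy.1 = m.+1 & (size xy.2 <= m.+1)%N]
    & pxy xy.1 xy.2 = p.
Proof.
move=> le3m mon_p size_p.
set q : {poly R[i]} := 'X^4 + 2%:R *: 'X^2.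
have q_neq0 : q != 0 := monic_neq0 (monic_X4_2X2 _).
exists (p %/ q, p %% q); last by rewrite /pxy mulrC -divp_eq.
split => /=.
- by apply: monic_divp; rewrite ?monic_X4_2X2 // size_p size_X4_2X2 ltnS leq_addl.
- by rewrite size_divp // size_p size_X4_2X2 -addSn addnK.
- rewrite -ltnS; apply: leq_trans (_ : 5 <= m.+2)%N; last by rewrite !ltnS.
  by rewrite -(size_X4_2X2 R[i]) ltn_modp.
Qed.

Lemma abscissa_le (R : realType) (q : {poly R[i]}) (r : R) :
  (forall z, root q z -> complex.Re z <= r) -> (abscissa q <= r%:E)%E.
Proof. by move=> Re_le; apply: ge_ereal_sup => _ [z /Re_le ? <-]. Qed.

Theorem mainTheorem2 (R : realType) (m : nat) (hm : (3 <= m)%N) :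
  ereal_inf [set abscissa (pxy xy.1 xy.2) | xy in
     [set xy : {poly R[i]} * {poly R[i]} |
        [/\ xy.1 \is monic, size xy.1 = m.+1 & (size xy.2 <= m.+1)%N]]]
  = -oo%E.
Proof.
apply: eq_ninfty => r.
have [xy adm_xy pxy_eq] := pxy_monic_decomposition hm
  (monic_exp (m + 4) (monicXsubC (r%:C)%C)) (size_exp_XsubC (m + 4) (r%:C)%C).
apply: (le_trans (ereal_inf_lbound _)); first by exists xy.
apply: abscissa_le => z; rewrite pxy_eq addnS root_exp_XsubC => /eqP ->.
exact: lexx.
Qed.
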